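(* For all sets S and Y, τ : H_{S⊎Y} → H_S is a monad morphism, i.e. τ · η^{S⊎Y} = η^S and τ · f^{*}_{S⊎Y} = (τ · f)^{*}_{S} · τ for every f : X → H_{S⊎Y} Z.
   Context: For a set S, a trajectory over S is a pair ⟨I,e⟩ with I a downset of the extended non-negative reals of the form [0,d] (d a finite non-negative real) or [0,d) (d a non-negative real or ∞), and e : I → S. Let Trj_S be the monoid of trajectories with domain [0,d), d finite, under concatenation ⟨[0,d1),e1⟩⌢⟨[0,d2),e2⟩ = ⟨[0,d1+d2), λt. if t<d1 then e1^t else e2^{t−d1}⟩, with unit the empty trajectory ε = ⟨∅, !⟩. Define H_S X = (Trj_S × X) ∪ (set of all trajectories over S), written as triples ⟨I,e,x⟩ (I of the form [0,d), d finite) and pairs ⟨I,e⟩. This is a monad (generalized writer monad) with unit η^S(x) = ⟨ε,x⟩ and Kleisli lifting f^{*}_S(m,x) = (m⌢n, y) if f(x) = ⟨n,y⟩, f^{*}_S(m,x) = m⌢e if f(x) = e is a trajectory, and f^{*}_S(e) = e for a trajectory e. Define τ : H_{S⊎Y} X → H_S X by τ(I,e,x) = ⟨I,e',x⟩ if I = I', and ⟨I',e'⟩ otherwise; and τ(I,e) = ⟨I',e'⟩, where ⟨I',e'⟩ is the largest trajectory (prefix of ⟨I,e⟩) such that for all t ∈ I', e^t = inl e'^t. *)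

From Stdlib Require Import Reals Lra ClassicalEpsilon.
Open Scope R_scope.
Set Implicit Arguments.

(* Downsets of the extended non-negative reals of the allowed forms:
   DCl d = [0,d] (d finite), DOp d = [0,d) (d finite), DInf = [0,oo). *)
Inductive dom := DCl (d : R) | DOp (d : R) | DInf.

Definition dom_ok (I : dom) : Prop :=
  match I with DCl d | DOp d => 0 <= d | DInf => True end.

Definition in_dom (I : dom) (t : R) : Prop :=
  0 <= t /\ match I with DCl d => t <= d | DOp d => t < d | DInf => True end.

Record trj (S : Type) := Trj {
  tdom : dom;
  tdom_ok : dom_ok tdom;
  tfun : forall t, in_dom tdom t -> S }.

(* Elements of the monoid Trj_S: trajectories with domain [0,d), d finite. *)
Record ftrj (S : Type) := FTrj {
  flen : R;
  flen_ok : 0 <= flen;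
  ffun : forall t, in_dom (DOp flen) t -> S }.

Definition ftrj_to_trj S (m : ftrj S) : trj S :=
  @Trj S (DOp (flen m)) (flen_ok m) (ffun m).

Lemma in_dom_empty t : in_dom (DOp 0) t -> False.
Proof. unfold in_dom; lra. Qed.

Definition eps_ftrj (S : Type) : ftrj S :=
  @FTrj S 0 (Rle_refl 0) (fun t h => False_rect S (@in_dom_empty t h)).

Definition eps_trj (S : Type) : trj S := ftrj_to_trj (eps_ftrj S).

Definition shift (d1 : R) (I : dom) : dom :=
  match I with DCl d => DCl (d1 + d) | DOp d => DOp (d1 + d) | DInf => DInf end.

Lemma shift_ok d1 I : 0 <= d1 -> dom_ok I -> dom_ok (shift d1 I).
Proof. destruct I; simpl; lra. Qed.

Lemma cat_l d1 I t : in_dom (shift d1 I) t -> t < d1 -> in_dom (DOp d1) t.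
Proof. destruct I; unfold in_dom; simpl; lra. Qed.

Lemma cat_r d1 I t : in_dom (shift d1 I) t -> ~ t < d1 -> in_dom I (t - d1).
Proof.
  intros H Hn; apply Rnot_lt_le in Hn; destruct I; unfold in_dom in *; simpl in *; lra.
Qed.

Definition cat_fun S (m : ftrj S) (I : dom) (e : forall t, in_dom I t -> S) :
  forall t, in_dom (shift (flen m) I) t -> S :=
  fun t h => match Rlt_dec t (flen m) with
             | left hl => @ffun S m t (@cat_l (flen m) I t h hl)
             | right hr => e (t - flen m) (@cat_r (flen m) I t h hr)
             end.

Definition cat_trj S (m : ftrj S) (e : trj S) : trj S :=
  @Trj S (shift (flen m) (tdom e)) (@shift_ok (flen m) (tdom e) (flen_ok m) (tdom_ok e))
         (@cat_fun S m (tdom e) (@tfun S e)).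

Definition cat_ftrj S (m n : ftrj S) : ftrj S :=
  @FTrj S (flen m + flen n) (Rplus_le_le_0_compat _ _ (flen_ok m) (flen_ok n))
          (@cat_fun S m (DOp (flen n)) (@ffun S n)).

(* H_S X = (Trj_S × X) ∪ (all trajectories over S) *)
Inductive H (S X : Type) :=
  | Hret (m : ftrj S) (x : X)
  | Htrj (e : trj S).
Arguments Hret {S X}.
Arguments Htrj {S X}.

Definition eta (S X : Type) (x : X) : H S X := Hret (eps_ftrj S) x.

Definition klift (S X Z : Type) (f : X -> H S Z) (p : H S X) : H S Z :=
  match p with
  | Hret m x => match f x with
                | Hret n y => Hret (cat_ftrj m n) y
                | Htrj e => Htrj (cat_trj m e)
                end
  | Htrj e => Htrj e
  end.

Definition inl_prefix (S Y : Type) (e : trj (S + Y)) (e' : trj S) : Prop :=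
  (forall t, in_dom (tdom e') t -> in_dom (tdom e) t) /\
  (forall t (h : in_dom (tdom e) t) (h' : in_dom (tdom e') t),
      @tfun _ e t h = inl (@tfun _ e' t h')).

Definition largest_inl_prefix (S Y : Type) (e : trj (S + Y)) (e' : trj S) : Prop :=
  inl_prefix e e' /\
  forall e'', inl_prefix e e'' ->
    forall t, in_dom (tdom e'') t -> in_dom (tdom e') t.

(* the largest prefix (chosen by Hilbert epsilon; it exists and is unique) *)
Definition tau_trj (S Y : Type) (e : trj (S + Y)) : trj S :=
  epsilon (inhabits (eps_trj S)) (largest_inl_prefix e).

Definition trj_to_ftrj S (e : trj S) (d : R) (hd : 0 <= d) (Heq : tdom e = DOp d) :
  ftrj S :=
  @FTrj S d hd (fun t h => @tfun S e t (eq_ind_r (fun I => in_dom I t) h Heq)).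

Definition tau (S Y X : Type) (p : H (S + Y) X) : H S X :=
  match p with
  | Hret m x =>
      let e' := tau_trj (ftrj_to_trj m) in
      match excluded_middle_informative (tdom e' = DOp (flen m)) with
      | left Heq => Hret (@trj_to_ftrj S e' (flen m) (flen_ok m) Heq) x
      | right _ => Htrj e'
      end
  | Htrj e => Htrj (tau_trj e)
  end.

(* τ keeps the largest initial segment of a trajectory that stays in S.  On a
   concatenation m ⌢ e this segment is either a proper part of m, when m
   itself leaves S before its end and e is then irrelevant, or all of m
   followed by the segment of e.  Since the Kleisli lifting of a returned
   value ⟨m, x⟩ is exactly "prefix m to f x", both monad-morphism laws reduce
   to these two cases.  To compute with the largest prefix we characterise it
   pointwise: it contains every t such that all of [0,t] is mapped into S; it
   exists by a supremum argument. *)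
From Stdlib Require Import Reals.
From Stdlib Require Import Lra ClassicalEpsilon Classical FunctionalExtensionality ProofIrrelevance.
Open Scope R_scope.
Set Implicit Arguments.

Lemma tfun_irr S (e : trj S) t1 t2 h1 h2 : t1 = t2 -> @tfun _ e t1 h1 = @tfun _ e t2 h2.
Proof. intros ->. f_equal. apply proof_irrelevance. Qed.

Lemma ffun_irr S (m : ftrj S) t1 t2 h1 h2 : t1 = t2 -> @ffun _ m t1 h1 = @ffun _ m t2 h2.
Proof. intros ->. f_equal. apply proof_irrelevance. Qed.

Lemma tfun_congr S (e1 e2 : trj S) : e1 = e2 -> forall t h1 h2, @tfun _ e1 t h1 = @tfun _ e2 t h2.
Proof. intros -> t h1 h2. apply tfun_irr; reflexivity. Qed.

Lemma trj_ext S (e1 e2 : trj S) : tdom e1 = tdom e2 ->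
  (forall t h1 h2, @tfun _ e1 t h1 = @tfun _ e2 t h2) -> e1 = e2.
Proof.
  destruct e1 as [I ok1 f1], e2 as [I2 ok2 f2]; simpl. intros <- Hf.
  rewrite (proof_irrelevance _ ok1 ok2).
  replace f2 with f1; [reflexivity|].
  apply functional_extensionality_dep; intro t.
  apply functional_extensionality; intro h. apply Hf.
Qed.

Lemma ftrj_ext S (m1 m2 : ftrj S) : flen m1 = flen m2 ->
  (forall t h1 h2, @ffun _ m1 t h1 = @ffun _ m2 t h2) -> m1 = m2.
Proof.
  destruct m1 as [d ok1 f1], m2 as [d2 ok2 f2]; simpl. intros <- Hf.
  rewrite (proof_irrelevance _ ok1 ok2).
  replace f2 with f1; [reflexivity|].
  apply functional_extensionality_dep; intro t.
  apply functional_extensionality; intro h. apply Hf.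
Qed.

Lemma ftrj_to_trj_cat S (m n : ftrj S) :
  ftrj_to_trj (cat_ftrj m n) = cat_trj m (ftrj_to_trj n).
Proof. unfold ftrj_to_trj, cat_trj, cat_ftrj; simpl. f_equal. apply proof_irrelevance. Qed.

Lemma in_dom_ge0 I t : in_dom I t -> 0 <= t.
Proof. intros [h _]; exact h. Qed.

Lemma in_dom_downward I t t' : in_dom I t -> 0 <= t' <= t -> in_dom I t'.
Proof. destruct I; unfold in_dom; intuition lra. Qed.

Lemma dom_ext I J : dom_ok I -> dom_ok J -> (forall t, in_dom I t <-> in_dom J t) -> I = J.
Proof.
  intros HI HJ H.
  pose proof (fun t => proj1 (H t)) as HIJ; pose proof (fun t => proj2 (H t)) as HJI.
  destruct I as [a|a|], J as [b|b|]; simpl in HI, HJ; unfold in_dom in HIJ, HJI.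
  - specialize (HIJ a); specialize (HJI b). f_equal; lra.
  - specialize (HIJ a); specialize (HJI ((a + b) / 2)). lra.
  - specialize (HJI (a + 1)). lra.
  - specialize (HJI b); specialize (HIJ ((a + b) / 2)). lra.
  - f_equal. destruct (Rtotal_order a b) as [h | [h | h]]; [| exact h |].
    + specialize (HJI a). lra.
    + specialize (HIJ b). lra.
  - specialize (HJI (Rmax a 0 + 1)). pose proof (Rmax_l a 0). pose proof (Rmax_r a 0). lra.
  - specialize (HIJ (Rmax b 0 + 1)). pose proof (Rmax_l b 0). pose proof (Rmax_r b 0). lra.
  - specialize (HIJ (Rmax b 0 + 1)). pose proof (Rmax_l b 0). pose proof (Rmax_r b 0). lra.
  - reflexivity.
Qed.

Lemma dom_of_downset (P : R -> Prop) :
  (forall t, P t -> 0 <= t) -> (forall t t', P t -> 0 <= t' <= t -> P t') ->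
  exists I, dom_ok I /\ forall t, in_dom I t <-> P t.
Proof.
  intros Hpos Hdown.
  destruct (classic (exists t, P t)) as [Hne | Hempty].
  2:{ exists (DOp 0); split; [simpl; lra|]. intro t; split; intro h.
      - destruct (in_dom_empty h).
      - exfalso; eauto. }
  destruct (classic (bound P)) as [Hb | Hunb].
  - destruct (completeness P Hb Hne) as [s [Hub Hlub]].
    assert (Hs : 0 <= s) by (destruct Hne as [t0 Ht0]; pose proof (Hpos _ Ht0); pose proof (Hub _ Ht0); lra).
    assert (Hbelow : forall t, 0 <= t < s -> P t).
    { intros t Ht. apply NNPP; intro Hnt.
      assert (s <= t); [|lra].
      apply Hlub. intros u Hu. apply Rnot_lt_le; intro Htu.
      apply Hnt, (Hdown u); [exact Hu | lra]. }
    destruct (classic (P s)) as [HPs | HPs].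
    + exists (DCl s); split; [exact Hs|]. intro t; unfold in_dom; split.
      * intros [h0 hs]. destruct (Rle_lt_or_eq_dec t s hs) as [hlt | ->]; auto.
      * intro Ht. split; [exact (Hpos _ Ht) | exact (Hub _ Ht)].
    + exists (DOp s); split; [exact Hs|]. intro t; unfold in_dom; split.
      * intro h; apply Hbelow; exact h.
      * intro Ht. split; [exact (Hpos _ Ht)|].
        destruct (Rle_lt_or_eq_dec t s (Hub _ Ht)) as [hlt | ->]; [exact hlt | contradiction].
  - exists DInf; split; [exact I|]. intro t; unfold in_dom; split.
    + intros [h0 _]. apply NNPP; intro Hnt. apply Hunb. exists t. intros u Hu.
      apply Rnot_lt_le; intro Htu. apply Hnt, (Hdown u); [exact Hu | lra].
    + intro Ht. split; [exact (Hpos _ Ht) | exact I].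
Qed.

Section InlPrefix.

Variables S Y : Type.
Implicit Types (e : trj (S + Y)) (p : trj S).

Definition inl_at e t : Prop :=
  in_dom (tdom e) t /\ forall h, exists s, @tfun _ e t h = inl s.

Definition maximal_inl_prefix e p : Prop :=
  inl_prefix e p /\
  forall t, 0 <= t -> (forall t', 0 <= t' <= t -> inl_at e t') -> in_dom (tdom p) t.

Lemma inl_prefix_inl_at e p t t' :
  inl_prefix e p -> in_dom (tdom p) t -> 0 <= t' <= t -> inl_at e t'.
Proof.
  intros [Hdom Hval] Ht Ht'. pose proof (in_dom_downward Ht Ht') as Ht''.
  split; [exact (Hdom _ Ht'')|]. intro h. exists (@tfun _ p t' Ht''). apply Hval.
Qed.

Definition inl_part (v : S + Y) (Hv : exists s, v = inl s) : S :=
  proj1_sig (constructive_indefinite_description _ Hv).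

Lemma inl_partE v Hv : v = inl (@inl_part v Hv).
Proof. unfold inl_part. destruct (constructive_indefinite_description _ Hv); auto. Qed.

Definition restrict_inl e (J : dom) (Jok : dom_ok J)
    (HJ : forall t, in_dom J t -> inl_at e t) : trj S :=
  @Trj S J Jok (fun t h => inl_part (proj2 (HJ t h) (proj1 (HJ t h)))).

Lemma restrict_inl_prefix e J Jok HJ : inl_prefix e (@restrict_inl e J Jok HJ).
Proof.
  split.
  - intros t h. exact (proj1 (HJ t h)).
  - intros t h h'; simpl. rewrite <- inl_partE. apply tfun_irr; reflexivity.
Qed.

Lemma largest_inl_prefixE e p : largest_inl_prefix e p <-> maximal_inl_prefix e p.
Proof.
  split.
  - intros [Hp Hlargest]. split; [exact Hp|]. intros t Ht Hall.
    assert (HJ : forall t', in_dom (DCl t) t' -> inl_at e t') by (intros t' []; apply Hall; lra).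
    apply (Hlargest _ (@restrict_inl_prefix e (DCl t) Ht HJ)).
    simpl; unfold in_dom; lra.
  - intros [Hp Hmax]. split; [exact Hp|]. intros p' Hp' t Ht.
    apply Hmax; [exact (in_dom_ge0 Ht)|]. intros t' Ht'.
    exact (inl_prefix_inl_at Hp' Ht Ht').
Qed.

Lemma maximal_inl_prefix_exists e : exists p, maximal_inl_prefix e p.
Proof.
  destruct (@dom_of_downset (fun t => 0 <= t /\ forall t', 0 <= t' <= t -> inl_at e t'))
    as [J [Jok HJ]].
  - intros t []; assumption.
  - intros t t' [_ Hall] Ht'. split; [lra|]. intros u Hu; apply Hall; lra.
  - assert (HJe : forall t, in_dom J t -> inl_at e t).
    { intros t Ht. apply HJ in Ht as [Ht0 Hall]. apply Hall; lra. }
    exists (restrict_inl Jok HJe). split; [apply restrict_inl_prefix|].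
    intros t Ht Hall. apply HJ; split; assumption.
Qed.

Lemma maximal_inl_prefix_unique e p1 p2 :
  maximal_inl_prefix e p1 -> maximal_inl_prefix e p2 -> p1 = p2.
Proof.
  intros [Hp1 Hmax1] [Hp2 Hmax2].
  assert (Hsub : forall p p', inl_prefix e p -> maximal_inl_prefix e p' ->
            forall t, in_dom (tdom p) t -> in_dom (tdom p') t).
  { intros p p' Hp [_ Hmax] t Ht. apply Hmax; [exact (in_dom_ge0 Ht)|].
    intros t' Ht'. exact (inl_prefix_inl_at Hp Ht Ht'). }
  apply trj_ext.
  - apply dom_ext; try apply tdom_ok. intro t; split.
    + apply Hsub; [exact Hp1 | split; assumption].
    + apply Hsub; [exact Hp2 | split; assumption].
  - intros t h1 h2. destruct Hp1 as [Hdom1 Hval1], Hp2 as [_ Hval2].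
    pose proof (Hval1 t (Hdom1 t h1) h1) as E1.
    rewrite (Hval2 t (Hdom1 t h1) h2) in E1. injection E1; auto.
Qed.

Lemma tau_trj_spec e : maximal_inl_prefix e (tau_trj e).
Proof.
  apply largest_inl_prefixE. unfold tau_trj. apply epsilon_spec.
  destruct (maximal_inl_prefix_exists e) as [p Hp].
  exists p. apply largest_inl_prefixE, Hp.
Qed.

Lemma tau_trj_unique e p : maximal_inl_prefix e p -> tau_trj e = p.
Proof. apply maximal_inl_prefix_unique, tau_trj_spec. Qed.

Lemma tdom_tau_trj_all_inl e :
  (forall t, in_dom (tdom e) t -> inl_at e t) -> tdom (tau_trj e) = tdom e.
Proof.
  intro Hall. destruct (tau_trj_spec e) as [[Hdom _] Hmax].
  apply dom_ext; try apply tdom_ok. intro t; split; [apply Hdom|].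
  intro Ht. apply Hmax; [exact (in_dom_ge0 Ht)|].
  intros t' Ht'. apply Hall, (in_dom_downward Ht Ht').
Qed.

Lemma tau_trj_eps : tau_trj (eps_trj (S + Y)) = eps_trj S.
Proof.
  apply tau_trj_unique. split; [split|].
  - intros t h; destruct (in_dom_empty h).
  - intros t h; destruct (in_dom_empty h).
  - intros t Ht Hall. destruct (Hall t (conj Ht (Rle_refl t))) as [h _].
    destruct (in_dom_empty h).
Qed.

Lemma cat_trj_l T (m : ftrj T) (e : trj T) t h h' :
  t < flen m -> @tfun _ (cat_trj m e) t h = @ffun _ m t h'.
Proof.
  intro Hl. simpl. unfold cat_fun.
  destruct (Rlt_dec t (flen m)); [apply ffun_irr; reflexivity | contradiction].
Qed.

Lemma cat_trj_r T (m : ftrj T) (e : trj T) t h h' :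
  ~ t < flen m -> @tfun _ (cat_trj m e) t h = @tfun _ e (t - flen m) h'.
Proof.
  intro Hl. simpl. unfold cat_fun.
  destruct (Rlt_dec t (flen m)); [contradiction | apply tfun_irr; reflexivity].
Qed.

Lemma in_shift_l d I t : dom_ok I -> 0 <= t < d -> in_dom (shift d I) t.
Proof. destruct I; unfold in_dom; simpl; intros; lra. Qed.

Lemma in_shift_r d I t : 0 <= d -> in_dom I (t - d) -> in_dom (shift d I) t.
Proof. destruct I; unfold in_dom; simpl; intros; lra. Qed.

Lemma inl_at_cat_l (m : ftrj (S + Y)) e t :
  t < flen m -> inl_at (cat_trj m e) t <-> inl_at (ftrj_to_trj m) t.
Proof.
  intro Hl. split; intros [Hd Hv].
  - assert (Hd' : in_dom (DOp (flen m)) t) by (split; [exact (in_dom_ge0 Hd) | exact Hl]).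
    split; [exact Hd'|]. intro h. destruct (Hv Hd) as [s Hs]. exists s.
    rewrite <- Hs. symmetry. apply cat_trj_l, Hl.
  - assert (Hd' : in_dom (tdom (cat_trj m e)) t).
    { apply in_shift_l; [apply tdom_ok | split; [exact (in_dom_ge0 Hd) | exact Hl]]. }
    split; [exact Hd'|]. intro h. destruct (Hv Hd) as [s Hs]. exists s.
    rewrite <- Hs. apply cat_trj_l, Hl.
Qed.

Lemma inl_at_cat_r (m : ftrj (S + Y)) e t :
  0 <= t -> inl_at (cat_trj m e) (flen m + t) -> inl_at e t.
Proof.
  intros Ht [Hd Hv].
  assert (Hn : ~ flen m + t < flen m) by lra.
  pose proof (@cat_r _ _ _ Hd Hn) as Hd'. simpl in Hd'.
  replace (flen m + t - flen m) with t in Hd' by ring.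
  split; [exact Hd'|]. intro h. destruct (Hv Hd) as [s Hs]. exists s.
  rewrite <- Hs, (cat_trj_r _ _ Hd (@cat_r _ _ _ Hd Hn) Hn). apply tfun_irr; ring.
Qed.

Lemma tau_trj_cat_partial (m : ftrj (S + Y)) e :
  tdom (tau_trj (ftrj_to_trj m)) <> DOp (flen m) ->
  tau_trj (cat_trj m e) = tau_trj (ftrj_to_trj m).
Proof.
  intro Hpartial. apply tau_trj_unique.
  destruct (tau_trj_spec (ftrj_to_trj m)) as [[Hdom Hval] Hmax].
  split; [split|].
  - intros t h. pose proof (Hdom t h) as [h0 hl].
    apply in_shift_l; [apply tdom_ok | split; assumption].
  - intros t h h'. pose proof (Hdom t h') as hm.
    rewrite (cat_trj_l _ _ h hm (proj2 hm)). apply Hval.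
  - intros t Ht Hall. destruct (Rlt_dec t (flen m)) as [Hl | Hl].
    + apply Hmax; [exact Ht|]. intros t' Ht'.
      apply (@inl_at_cat_l m e); [lra | apply Hall, Ht'].
    + (* then all of m stays in S, so its prefix is the whole of m *)
      exfalso. apply Hpartial, tdom_tau_trj_all_inl.
      intros t' [Ht0 Hlt]. simpl in Hlt.
      apply (@inl_at_cat_l m e); [exact Hlt | apply Hall; lra].
Qed.

Lemma tau_trj_cat_full (m : ftrj (S + Y)) (m' : ftrj S) e :
  flen m' = flen m -> tau_trj (ftrj_to_trj m) = ftrj_to_trj m' ->
  tau_trj (cat_trj m e) = cat_trj m' (tau_trj e).
Proof.
  intros Hlen Hm. apply tau_trj_unique.
  destruct (tau_trj_spec (ftrj_to_trj m)) as [[_ Hval] _].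
  rewrite Hm in Hval.
  destruct (tau_trj_spec e) as [[Hdom Hvale] Hmax].
  split; [split|].
  - intros t h. destruct (Rlt_dec t (flen m)) as [Hl | Hl].
    + apply in_shift_l; [apply tdom_ok | split; [exact (in_dom_ge0 h) | exact Hl]].
    + assert (Hl' : ~ t < flen m') by lra.
      pose proof (@cat_r _ _ _ h Hl') as hq. rewrite Hlen in hq.
      apply in_shift_r; [exact (flen_ok m) | exact (Hdom _ hq)].
  - intros t h h'. destruct (Rlt_dec t (flen m)) as [Hl | Hl].
    + assert (hm : in_dom (DOp (flen m)) t) by (split; [exact (in_dom_ge0 h) | exact Hl]).
      assert (hm' : in_dom (DOp (flen m')) t) by (rewrite Hlen; exact hm).
      rewrite (cat_trj_l _ _ h hm Hl), (cat_trj_l _ _ h' hm' ltac:(lra)).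
      exact (Hval t hm hm').
    + assert (Hl' : ~ t < flen m') by lra.
      pose proof (@cat_r _ _ _ h' Hl') as hq. rewrite Hlen in hq.
      rewrite (cat_trj_r _ _ h (Hdom _ hq) Hl).
      rewrite (cat_trj_r _ _ h' (@cat_r _ _ _ h' Hl') Hl').
      rewrite (Hvale _ (Hdom _ hq) hq). f_equal. apply tfun_irr. lra.
  - intros t Ht Hall. destruct (Rlt_dec t (flen m)) as [Hl | Hl].
    + apply in_shift_l; [apply tdom_ok | lra].
    + apply in_shift_r; [exact (flen_ok m')|]. rewrite Hlen.
      apply Hmax; [lra|]. intros t' Ht'. apply (@inl_at_cat_r m); [lra|].
      apply Hall. pose proof (flen_ok m). lra.
Qed.

Lemma tau_Hret_full X (m : ftrj (S + Y)) (m' : ftrj S) (x : X) :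
  flen m' = flen m -> tau_trj (ftrj_to_trj m) = ftrj_to_trj m' ->
  @tau S Y X (Hret m x) = Hret m' x.
Proof.
  intros Hlen Hm. unfold tau; cbn zeta.
  destruct (excluded_middle_informative _) as [Hfull | Hpartial].
  - f_equal. apply ftrj_ext; [simpl; congruence|].
    intros t h1 h2; simpl. apply (tfun_congr Hm).
  - exfalso. apply Hpartial. rewrite Hm. simpl. congruence.
Qed.

Lemma tau_Hret_partial X (m : ftrj (S + Y)) (x : X) :
  tdom (tau_trj (ftrj_to_trj m)) <> DOp (flen m) ->
  @tau S Y X (Hret m x) = Htrj (tau_trj (ftrj_to_trj m)).
Proof.
  intro Hpartial. unfold tau; cbn zeta.
  destruct (excluded_middle_informative _); [contradiction | reflexivity].
Qed.

Lemma tau_trj_cases (m : ftrj (S + Y)) :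
  (exists m' : ftrj S, flen m' = flen m /\ tau_trj (ftrj_to_trj m) = ftrj_to_trj m') \/
  tdom (tau_trj (ftrj_to_trj m)) <> DOp (flen m).
Proof.
  destruct (classic (tdom (tau_trj (ftrj_to_trj m)) = DOp (flen m))) as [Hfull | Hpartial];
    [left | right; exact Hpartial].
  exists (trj_to_ftrj _ (flen_ok m) Hfull). split; [reflexivity|].
  apply trj_ext; [exact Hfull|]. intros t h1 h2; simpl. apply tfun_irr; reflexivity.
Qed.

(* [hcat m] is the Kleisli lifting restricted to ⟨m, x⟩: [klift f (Hret m x)] is [hcat m (f x)]. *)
Definition hcat T Z (m : ftrj T) (q : H T Z) : H T Z :=
  match q with
  | Hret n y => Hret (cat_ftrj m n) y
  | Htrj e => Htrj (cat_trj m e)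
  end.

Lemma tau_hcat_full Z (m : ftrj (S + Y)) (m' : ftrj S) (q : H (S + Y) Z) :
  flen m' = flen m -> tau_trj (ftrj_to_trj m) = ftrj_to_trj m' ->
  tau (hcat m q) = hcat m' (tau q).
Proof.
  intros Hlen Hm. destruct q as [n y | e]; cbn [hcat].
  2:{ simpl. f_equal. apply tau_trj_cat_full; assumption. }
  assert (Hcat : tau_trj (ftrj_to_trj (cat_ftrj m n)) = cat_trj m' (tau_trj (ftrj_to_trj n))).
  { rewrite ftrj_to_trj_cat. apply tau_trj_cat_full; assumption. }
  destruct (tau_trj_cases n) as [[n' [Hlen' Hn]] | Hpartial].
  - rewrite (tau_Hret_full n y Hlen' Hn). cbn [hcat].
    apply tau_Hret_full; [simpl; congruence|].
    rewrite Hcat, Hn, ftrj_to_trj_cat. reflexivity.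
  - rewrite (tau_Hret_partial n y Hpartial). cbn [hcat].
    rewrite tau_Hret_partial; [f_equal; exact Hcat|].
    rewrite Hcat. simpl. intro Hdom. apply Hpartial.
    destruct (tdom (tau_trj (ftrj_to_trj n))); simpl in Hdom; try discriminate.
    injection Hdom; intro; f_equal; lra.
Qed.

Lemma tau_hcat_partial Z (m : ftrj (S + Y)) (q : H (S + Y) Z) :
  tdom (tau_trj (ftrj_to_trj m)) <> DOp (flen m) ->
  tau (hcat m q) = Htrj (tau_trj (ftrj_to_trj m)).
Proof.
  intro Hpartial. destruct q as [n y | e]; cbn [hcat].
  2:{ simpl. f_equal. apply tau_trj_cat_partial, Hpartial. }
  assert (Hcat : tau_trj (ftrj_to_trj (cat_ftrj m n)) = tau_trj (ftrj_to_trj m)).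
  { rewrite ftrj_to_trj_cat. apply tau_trj_cat_partial, Hpartial. }
  rewrite tau_Hret_partial, Hcat; [reflexivity|].
  (* a prefix of m cannot have domain [0, |m| + |n|) unless it is all of m *)
  rewrite Hcat. simpl. intro Hdom. destruct (tau_trj_spec (ftrj_to_trj m)) as [[Hincl _] _].
  destruct (Rle_lt_or_eq_dec 0 (flen n) (flen_ok n)) as [Hn | Hn].
  - assert (Hend : in_dom (tdom (tau_trj (ftrj_to_trj m))) (flen m)).
    { rewrite Hdom. split; [exact (flen_ok m) | lra]. }
    destruct (Hincl _ Hend) as [_ Hlt]. simpl in Hlt. lra.
  - apply Hpartial. rewrite Hdom, <- Hn, Rplus_0_r. reflexivity.
Qed.

End InlPrefix.

Theorem lemma2 (S Y : Type) :
  (forall (X : Type) (x : X), @tau S Y X (@eta (S + Y) X x) = @eta S X x) /\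
  (forall (X Z : Type) (f : X -> H (S + Y) Z) (p : H (S + Y) X),
      @tau S Y Z (@klift (S + Y) X Z f p)
      = @klift S X Z (fun x => @tau S Y Z (f x)) (@tau S Y X p)).
Proof.
  split.
  - intros X x. apply tau_Hret_full; [reflexivity | apply tau_trj_eps].
  - intros X Z f [m x | e]; [| reflexivity].
    destruct (tau_trj_cases m) as [[m' [Hlen Hm]] | Hpartial].
    + rewrite (tau_Hret_full m x Hlen Hm). exact (tau_hcat_full m (f x) Hlen Hm).
    + rewrite (tau_Hret_partial m x Hpartial). exact (tau_hcat_partial m (f x) Hpartial).
Qed.
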